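(* Let $(X,d)$ be a metric space, $E\subseteq X$, $x\in E$. The values of $$\underline{\delta}_E(x)=\liminf_{\lambda\to0}\liminf_{r\to0}\frac{\log n(\lambda r,E\cap\overline{B}(x,r))}{\log 1/\lambda},\qquad \overline{\delta}_E(x)=\limsup_{\lambda\to0}\limsup_{r\to0}\frac{\log n(\lambda r,E\cap\overline{B}(x,r))}{\log 1/\lambda}$$ do not change if $n$ is replaced by $\nu$ or by $\overline{n}$, or if $E\cap\overline{B}(x,r)$ is replaced by $E\cap B(x,r)$. Moreover, if $E$ is closed in $X$, they do not change if $E\cap\overline{B}(x,r)$ is replaced by $\overline{E\cap B(x,r)}$.
   Context: $B(x,r)$ is the open ball, $\overline{B}(x,r)=\{y:d(x,y)\le r\}$ the closed ball, and $\overline{A}$ denotes closure. For $A\subseteq X$: $n(r,A)$ (resp. $\overline{n}(r,A)$) is the minimum number of open (resp. closed) balls of radius $r$ necessary to cover $A$, and $\nu(r,A)$ is the maximum number of pairwise disjoint open balls of $A$ (as a metric space) of radius $r$ contained in $A$. The numbers $\underline{\delta}_E(x)$, $\overline{\delta}_E(x)$ are the lower and upper tangential dimensions of $E$ at $x$. *)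

From HB Require Import structures.
From mathcomp Require Import all_boot all_order all_algebra.
From mathcomp Require Import all_classical all_reals all_analysis.
Set Implicit Arguments. Unset Strict Implicit. Unset Printing Implicit Defensive.
Import Order.TTheory GRing.Theory Num.Theory.
Local Open Scope classical_set_scope.
Local Open Scope ring_scope.

Definition is_metric {R : realType} {T : Type} (d : T -> T -> R) : Prop :=
  [/\ forall x y, 0 <= d x y,
      forall x y, d x y = 0 <-> x = y,
      forall x y, d x y = d y x &
      forall x y z, d x z <= d x y + d y z].

Definition oball {R : realType} {T : Type} (d : T -> T -> R) (x : T) (r : R) : set T :=
  [set y | d x y < r].
Definition cball {R : realType} {T : Type} (d : T -> T -> R) (x : T) (r : R) : set T :=
  [set y | d x y <= r].

Definition mclosure {R : realType} {T : Type} (d : T -> T -> R) (A : set T) : set T :=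
  [set y | forall e : R, 0 < e -> exists2 a, A a & d y a < e].
Definition mclosed {R : realType} {T : Type} (d : T -> T -> R) (A : set T) : Prop :=
  mclosure d A `<=` A.

(* n(r,A): minimal number of open balls (of X) of radius r covering A;
   +oo if no finite cover exists *)
Definition ncov {R : realType} {T : Type} (d : T -> T -> R) (r : R) (A : set T)
  : \bar R :=
  ereal_inf [set (k%:R)%:E | k in [set k : nat | exists c : 'I_k -> T,
     A `<=` [set y | exists i, oball d (c i) r y]]].

Definition ncovc {R : realType} {T : Type} (d : T -> T -> R) (r : R) (A : set T)
  : \bar R :=
  ereal_inf [set (k%:R)%:E | k in [set k : nat | exists c : 'I_k -> T,
     A `<=` [set y | exists i, cball d (c i) r y]]].

(* nu(r,A): maximal number of pairwise disjoint open balls of the metric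
   space A (i.e. A `&` B(a,r) with a in A) of radius r; may be +oo *)
Definition npack {R : realType} {T : Type} (d : T -> T -> R) (r : R) (A : set T)
  : \bar R :=
  ereal_sup [set (k%:R)%:E | k in [set k : nat | exists c : 'I_k -> T,
     (forall i, A (c i)) /\
     (forall i j, i != j ->
        (A `&` oball d (c i) r) `&` (A `&` oball d (c j) r) = set0)]].

Definition elog {R : realType} (x : \bar R) : \bar R :=
  match x with
  | EFin r => if (0 < r)%R then EFin (ln r) else -oo%E
  | +oo%E => +oo%E
  | -oo%E => -oo%E
  end.

Definition eliminf0 {R : realType} (f : R -> \bar R) : \bar R :=
  ereal_sup [set ereal_inf [set f t | t in [set t : R | 0 < t < e]]
            | e in [set e : R | 0 < e]].
Definition elimsup0 {R : realType} (f : R -> \bar R) : \bar R :=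
  ereal_inf [set ereal_sup [set f t | t in [set t : R | 0 < t < e]]
            | e in [set e : R | 0 < e]].

Definition tratio {R : realType} {T : Type} (N : R -> set T -> \bar R)
  (S : R -> set T) (lam r : R) : \bar R :=
  (elog (N (lam * r)%R (S r)) * ((ln (1 / lam))^-1)%R%:E)%E.

Definition lower_tdim {R : realType} {T : Type} (N : R -> set T -> \bar R)
  (S : R -> set T) : \bar R :=
  eliminf0 (fun lam => eliminf0 (fun r => tratio N S lam r)).
Definition upper_tdim {R : realType} {T : Type} (N : R -> set T -> \bar R)
  (S : R -> set T) : \bar R :=
  elimsup0 (fun lam => elimsup0 (fun r => tratio N S lam r)).

From HB Require Import structures.
From mathcomp Require Import all_boot all_order all_algebra.
From mathcomp Require Import all_classical all_reals all_analysis.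
From mathcomp Require Import lra ring.
Import Order.TTheory GRing.Theory Num.Theory.
Local Open Scope classical_set_scope.
Local Open Scope ring_scope.

(* Any two of the counting functions and set families in the statement
   dominate each other up to a fixed rescaling, N1(lam r, S1 r) <=
   N2(c lam * a r, S2 (a r)) with constants 0 < c <= 1 and a > 0:
   nu(r) <= n(r/2) and n(r) <= nu(r/2), nbar(r) <= n(r) <= nbar(r/2), and
   E `&` B(x,r) <= E `&` Bbar(x,r) <= E `&` B(x,2r), also with the closure of
   E `&` B(x,r) in the middle when E is closed.  Replacing r by a r does not
   change a limit at r -> 0, and replacing lam by c lam only adds the constant
   log(1/c) to log(1/lam), which is negligible as lam -> 0. *)

Section LimitsAtZero.
Context {R : realType}.
Local Open Scope ereal_scope.

Lemma eliminf0_le_scale {f g : R -> \bar R} {a δ : R} : (0 < a)%R -> (0 < δ)%R ->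
  (forall t, (0 < t < δ)%R -> f t <= g (a * t)%R) -> eliminf0 f <= eliminf0 g.
Proof.
move=> a0 d0 fg; apply: ge_ereal_sup => _ [e e0 <-].
have ae0 : (0 < a * Num.min e δ)%R by rewrite mulr_gt0 // lt_min e0 d0.
apply: le_trans (ereal_sup_ubound _); last by exists (a * Num.min e δ)%R.
apply: le_ereal_inf_tmp => _ [s /andP[s0 sae] <-].
move: sae; rewrite -ltr_pdivrMl // lt_min => /andP[s_ae s_ad].
have s_a0 : (0 < a^-1 * s)%R by rewrite mulr_gt0 ?invr_gt0.
apply: ge_ereal_inf; exists (f (a^-1 * s)%R); first by exists (a^-1 * s)%R => //; apply/andP.
by rewrite -[in g s](mulVKf (lt0r_neq0 a0) s); apply: fg; apply/andP.
Qed.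

Lemma elimsup0_le_scale {f g : R -> \bar R} {a δ : R} : (0 < a)%R -> (0 < δ)%R ->
  (forall t, (0 < t < δ)%R -> f t <= g (a * t)%R) -> elimsup0 f <= elimsup0 g.
Proof.
move=> a0 d0 fg; apply: le_ereal_inf_tmp => _ [e e0 <-].
pose e' := Num.min δ (a^-1 * e)%R.
have e'0 : (0 < e')%R by rewrite lt_min d0 mulr_gt0 ?invr_gt0.
apply: ge_ereal_inf; exists (ereal_sup [set f t | t in [set t | (0 < t < e')%R]]).
  by exists e'.
apply: ge_ereal_sup => _ [t /andP[t0 +] <-].
rewrite /e' lt_min ltr_pdivlMl // => /andP[td tae].
apply: le_ereal_sup_tmp; exists (g (a * t)%R); last by apply: fg; apply/andP.
by exists (a * t)%R => //; apply/andP; rewrite mulr_gt0.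
Qed.

Lemma eliminf0_pZl (f : R -> \bar R) (b : R) : (0 < b)%R ->
  eliminf0 (fun t => b%:E * f t) = b%:E * eliminf0 f.
Proof.
move=> b0; rewrite /eliminf0 -ereal_sup_pZl // image_comp; congr ereal_sup.
by apply: eq_imagel => e _ /=; rewrite -ereal_inf_pZl // image_comp.
Qed.

Lemma elimsup0_pZl (f : R -> \bar R) (b : R) : (0 < b)%R ->
  elimsup0 (fun t => b%:E * f t) = b%:E * elimsup0 f.
Proof.
move=> b0; rewrite /elimsup0 -ereal_inf_pZl // image_comp; congr ereal_inf.
by apply: eq_imagel => e _ /=; rewrite -ereal_sup_pZl // image_comp.
Qed.

Lemma lee_mul1Dgt0 (x y : \bar R) :
  (forall e : R, (0 < e)%R -> x <= (1 + e)%:E * y) -> x <= y.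
Proof.
case: y => [y| |] xy; last 2 first.
- by rewrite leey.
- by have := xy 1%R ltr01; rewrite gt0_muleNy // lte_fin addr_gt0.
case: x xy => [x| |] xy; last 2 first.
- by have := xy 1%R ltr01; rewrite -EFinM leNgt ltey.
- by rewrite leNye.
rewrite lee_fin; apply/ler_addgt0Pr => e e0.
have [y0|y0] := leP y 0%R.
  by have := xy 1%R ltr01; rewrite -EFinM lee_fin; nra.
have := xy (e / y)%R (divr_gt0 e0 y0); rewrite -EFinM lee_fin mulrDl mul1r.
by rewrite mulfVK ?gt_eqF.
Qed.

End LimitsAtZero.

Lemma ln_recipM_le {R : realType} {c e lam : R} : 0 < c -> 0 < e -> 0 < lam ->
  lam < expR (ln c / e) -> ln (1 / (c * lam)) <= (1 + e) * ln (1 / lam).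
Proof.
move=> c0 e0 lam0 lam_small.
have : ln lam < ln c / e by rewrite -[X in _ < X]expRK ltr_ln ?posrE ?expR_gt0.
rewrite ltr_pdivlMr // !div1r !lnV ?posrE ?mulr_gt0 // lnM ?posrE //.
nra.
Qed.

Section ExtendedLog.
Context {R : realType}.
Local Open Scope ereal_scope.

Lemma le_elog {u v : \bar R} : u <= v -> elog u <= elog v.
Proof.
case: u => [r| |] uv /=; last by rewrite leNye.
- case: ifPn => r0; last by rewrite leNye.
  case: v uv => [s| |] //= uv; last by rewrite leey.
  have s0 : (0 < s)%R by rewrite (lt_le_trans r0) // -lee_fin.
  by rewrite ifT // lee_fin ler_ln ?posrE // -lee_fin.
- by case: v uv.
Qed.

Lemma elog_ge0 (u : \bar R) : 1 <= u -> 0 <= elog u.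
Proof.
case: u => [r| |] r1 /=; last 2 first.
- by rewrite leey.
- by move: r1; rewrite leeNy_eq.
have r0 : (0 < r)%R by rewrite (lt_le_trans ltr01).
by rewrite ifT // lee_fin ln_ge0.
Qed.

End ExtendedLog.

Section TangentialDimensionComparison.
Context {R : realType} {T : Type}.
Implicit Types (N : R -> set T -> \bar R) (S : R -> set T).

Definition count_dominated N1 S1 N2 S2 : Prop :=
  exists c a : R, [/\ 0 < c <= 1, 0 < a &
    forall lam r : R, 0 < lam -> 0 < r ->
      (N1 (lam * r)%R (S1 r) <= N2 (c * lam * (a * r))%R (S2 (a * r)%R))%E].

Definition count_ge1 N S : Prop := forall s r, 0 < s -> 0 < r -> (1 <= N s (S r))%E.

Lemma tratio_le_scale N1 S1 N2 S2 (c a e lam r : R) :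
  0 < c <= 1 -> 0 < a -> 0 < e -> 0 < lam < Num.min 1 (expR (ln c / e)) -> 0 < r ->
  count_ge1 N2 S2 ->
  (N1 (lam * r)%R (S1 r) <= N2 (c * lam * (a * r))%R (S2 (a * r)%R))%E ->
  (tratio N1 S1 lam r <= (1 + e)%:E * tratio N2 S2 (c * lam)%R (a * r)%R)%E.
Proof.
move=> /andP[c0 c1] a0 e0 /andP[lam0]; rewrite lt_min => /andP[lam1 lam_small] r0 N2_ge1 N12.
have clam0 : 0 < c * lam by rewrite mulr_gt0.
have clam1 : c * lam < 1 by nra.
have ln_pos (t : R) : 0 < t -> t < 1 -> 0 < ln (1 / t).
  by move=> t0 t1; rewrite ln_gt0 // div1r invf_gt1.
have inv_ln_le : (ln (1 / lam))^-1 <= (1 + e) * (ln (1 / (c * lam)))^-1.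
  have := ln_recipM_le c0 e0 lam0 lam_small.
  have := ln_pos _ lam0 lam1; have := ln_pos _ clam0 clam1.
  move: (ln (1 / lam)) (ln (1 / (c * lam))) => L M M0 L0 ML.
  by rewrite ler_pdivlMr // ler_pdivrMl // mulrC.
have inv_ln_ge0 : (0 <= ((ln (1 / lam))^-1)%:E)%E by rewrite lee_fin invr_ge0 ltW ?ln_pos.
rewrite /tratio; apply: le_trans (lee_wpmul2r inv_ln_ge0 (le_elog N12)) _.
rewrite muleCA -EFinM; apply: lee_wpmul2l; last by rewrite lee_fin.
by apply: elog_ge0; apply: N2_ge1; rewrite ?mulr_gt0.
Qed.

Lemma tdim_le_of_dominated {N1 S1 N2 S2} :
  count_dominated N1 S1 N2 S2 -> count_ge1 N2 S2 ->
  (lower_tdim N1 S1 <= lower_tdim N2 S2)%E /\ (upper_tdim N1 S1 <= upper_tdim N2 S2)%E.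
Proof.
move=> [c [a [c01 a0 N12]]] N2_ge1.
have c0 : 0 < c by case/andP: c01.
suff scaled e : 0 < e ->
    (lower_tdim N1 S1 <= (1 + e)%:E * lower_tdim N2 S2)%E /\
    (upper_tdim N1 S1 <= (1 + e)%:E * upper_tdim N2 S2)%E.
  by split; apply: lee_mul1Dgt0 => e /scaled[].
move=> e0; have e1 : 0 < 1 + e by rewrite addr_gt0.
have lam_max0 : 0 < Num.min 1 (expR (ln c / e)) by rewrite lt_min ltr01 expR_gt0.
have step lam r : 0 < lam < Num.min 1 (expR (ln c / e)) -> 0 < r < 1 ->
    (tratio N1 S1 lam r <= (1 + e)%:E * tratio N2 S2 (c * lam)%R (a * r)%R)%E.
  move=> lam_small /andP[r0 _]; apply: tratio_le_scale => //.
  by apply: N12; case/andP: lam_small.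
rewrite /lower_tdim /upper_tdim -eliminf0_pZl // -elimsup0_pZl //; split.
- apply: (eliminf0_le_scale c0 lam_max0) => lam lam_small.
  rewrite -eliminf0_pZl //; apply: (eliminf0_le_scale a0 ltr01) => r r_small.
  exact: step.
- apply: (elimsup0_le_scale c0 lam_max0) => lam lam_small.
  rewrite -elimsup0_pZl //; apply: (elimsup0_le_scale a0 ltr01) => r r_small.
  exact: step.
Qed.

Lemma tdim_eq_of_dominated N1 S1 N2 S2 :
  count_dominated N1 S1 N2 S2 -> count_dominated N2 S2 N1 S1 ->
  count_ge1 N1 S1 -> count_ge1 N2 S2 ->
  lower_tdim N1 S1 = lower_tdim N2 S2 /\ upper_tdim N1 S1 = upper_tdim N2 S2.
Proof.
move=> N12 N21 N1_ge1 N2_ge1.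
have [le12 ue12] := tdim_le_of_dominated N12 N2_ge1.
have [le21 ue21] := tdim_le_of_dominated N21 N1_ge1.
by split; apply/le_anti; rewrite ?le12 ?ue12.
Qed.

Lemma count_dominated_id N1 S1 N2 S2 :
  (forall s r, 0 < s -> 0 < r -> (N1 s (S1 r) <= N2 s (S2 r))%E) ->
  count_dominated N1 S1 N2 S2.
Proof.
move=> N12; exists 1, 1; split=> // [|lam r lam0 r0]; first by rewrite ltr01 lexx.
by rewrite !mul1r; apply: N12; rewrite ?mulr_gt0.
Qed.

Lemma count_dominated_half N1 S1 N2 S2 :
  (forall s r, 0 < s -> 0 < r -> (N1 s (S1 r) <= N2 (s / 2)%R (S2 r))%E) ->
  count_dominated N1 S1 N2 S2.
Proof.
move=> N12; exists 2^-1, 1; split=> // [|lam r lam0 r0]; first lra.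
have -> : 2^-1 * lam * (1 * r) = lam * r / 2 by ring.
by rewrite mul1r; apply: N12; rewrite ?mulr_gt0.
Qed.

Lemma count_dominated_double N1 S1 N2 S2 :
  (forall s r, 0 < s -> 0 < r -> (N1 s (S1 r) <= N2 s (S2 (2 * r)%R))%E) ->
  count_dominated N1 S1 N2 S2.
Proof.
move=> N12; exists 2^-1, 2; split=> // [|lam r lam0 r0]; first lra.
have -> : 2^-1 * lam * (2 * r) = lam * r by field.
by apply: N12; rewrite ?mulr_gt0.
Qed.

End TangentialDimensionComparison.

Section CoveringAndPackingNumbers.
Context {R : realType} {T : Type} (d : T -> T -> R).
Implicit Types (A B : set T) (r s : R).

Definition is_packing r A {k} (c : 'I_k -> T) : Prop :=
  (forall i, A (c i)) /\
  (forall i j, i != j -> (A `&` oball d (c i) r) `&` (A `&` oball d (c j) r) = set0).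

Local Open Scope ereal_scope.

Lemma ncov_le_card {r A k} {c : 'I_k -> T} :
  A `<=` [set y | exists i, oball d (c i) r y] -> ncov d r A <= k%:R%:E.
Proof. by move=> cover; apply: ereal_inf_lbound; exists k => //; exists c. Qed.

Lemma card_le_npack {r A k} {c : 'I_k -> T} : is_packing r A c -> k%:R%:E <= npack d r A.
Proof. by move=> pack; apply: ereal_sup_ubound; exists k => //; exists c. Qed.

Lemma ncov_ge1 r A a : A a -> 1 <= ncov d r A.
Proof.
move=> Aa; apply: le_ereal_inf_tmp => _ [k [c cover] <-].
have [i _] := cover a Aa; rewrite lee_fin ler1n.
by case: k c cover i => [|k] c cover [].
Qed.

Lemma ncovc_ge1 r A a : A a -> 1 <= ncovc d r A.
Proof.
move=> Aa; apply: le_ereal_inf_tmp => _ [k [c cover] <-].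
have [i _] := cover a Aa; rewrite lee_fin ler1n.
by case: k c cover i => [|k] c cover [].
Qed.

Lemma npack_ge1 r A a : A a -> 1 <= npack d r A.
Proof.
move=> Aa; apply: (@card_le_npack _ _ 1 (fun=> a)); split => // i j.
by rewrite !ord1 eqxx.
Qed.

Lemma le_ncov r A B : A `<=` B -> ncov d r A <= ncov d r B.
Proof.
move=> AB; apply: ereal_inf_le_tmp => _ [k [c cover] <-].
by exists k => //; exists c => y /AB /cover.
Qed.

Lemma ncovc_le_ncov r A : ncovc d r A <= ncov d r A.
Proof.
apply: ereal_inf_le_tmp => _ [k [c cover] <-].
by exists k => //; exists c => y /cover [i yi]; exists i; apply: ltW.
Qed.

Lemma ncov_le_ncovc_half s A : (0 < s)%R -> ncov d s A <= ncovc d (s / 2) A.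
Proof.
move=> s0; apply: ereal_inf_le_tmp => _ [k [c cover] <-].
exists k => //; exists c => y /cover [i yi]; exists i.
by apply: le_lt_trans yi _; lra.
Qed.

Hypothesis d_metric : is_metric d.

Lemma dist_xx y : d y y = 0%R.
Proof. by case: d_metric => _ d0 _ _; apply/d0. Qed.

Lemma dist_lt_half_tri u v y s : (d y u < s / 2)%R -> (d y v < s / 2)%R -> (d u v < s)%R.
Proof.
case: d_metric => _ _ dsym dtri yu yv.
by apply: le_lt_trans (dtri u y v) _; rewrite dsym; lra.
Qed.

(* Each centre of a packing lies in a covering ball, and two centres in the
   same ball of radius s/2 would make their s-balls meet. *)
Lemma npack_le_ncov_half s A : (0 < s)%R -> npack d s A <= ncov d (s / 2) A.
Proof.
move=> s0; apply: ge_ereal_sup => _ [k [c [cA c_disj]] <-].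
apply: le_ereal_inf_tmp => _ [m [z cover] <-].
rewrite lee_fin ler_nat.
have /choice [f cf] i : exists j, oball d (z j) (s / 2) (c i) by apply: cover.
suff f_inj : injective f by have := leq_card f f_inj; rewrite !card_ord.
move=> i j fij; apply/eqP/negPn/negP => nij.
suff : (A `&` oball d (c i) s `&` (A `&` oball d (c j) s)) (c i) by rewrite c_disj.
do 2!split => //; rewrite /oball /= ?dist_xx //.
by apply: (dist_lt_half_tri _ _ (z (f j))); [apply: cf | rewrite -fij; apply: cf].
Qed.

Lemma is_packing_extend s A k (c : 'I_k -> T) b :
  is_packing (s / 2) A c -> A b -> (forall i, ~ oball d (c i) s b) ->
  is_packing (s / 2) A (fun j : 'I_k.+1 => if unlift ord_max j is Some i then c i else b).
Proof.
case: d_metric => _ _ dsym _ [cA c_disj] Ab far_b; split; first by move=> j; case: unliftP.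
move=> j1 j2; apply: contraNeq => /set0P[y [[Ay y1] [_ y2]]].
case: unliftP y1 => [i1 -> y1|-> y1]; case: unliftP y2 => [i2 -> y2|-> y2] //.
- rewrite (inj_eq lift_inj); apply: contraT => ni.
  suff : ((A `&` oball d (c i1) (s / 2)) `&` (A `&` oball d (c i2) (s / 2))) y.
    by rewrite c_disj.
  by do 2!split.
- by case: (far_b i1); apply: (dist_lt_half_tri _ _ y); rewrite dsym.
- by case: (far_b i2); apply: (dist_lt_half_tri _ _ y); rewrite dsym.
Qed.

(* If nu(s/2) < n(s), no packing is an s-cover, so adding a point far from
   all centres yields packings of every size, and nu(s/2) = +oo. *)
Lemma ncov_le_npack_half s A : ncov d s A <= npack d (s / 2) A.
Proof.
rewrite leNgt; apply/negP => npack_lt.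
have packs n : exists c : 'I_n -> T, is_packing (s / 2) A c.
  elim: n => [|n [c c_pack]]; first by exists (ffun0 (card_ord 0)); split => // -[].
  have [b [Ab far_b]] : exists b, A b /\ forall i, ~ oball d (c i) s b.
    apply: contrapT => covered.
    have cover : A `<=` [set y | exists i, oball d (c i) s y].
      move=> y Ay; apply: contrapT => far_y; apply: covered.
      by exists y; split => // i yi; apply: far_y; exists i.
    have := le_lt_trans (card_le_npack c_pack) (lt_le_trans npack_lt (ncov_le_card cover)).
    by rewrite ltxx.
  by eexists; apply: is_packing_extend c_pack Ab far_b.
have n_le_npack n : n%:R%:E <= npack d (s / 2) A.
  by have [c c_pack] := packs n; apply: card_le_npack c_pack.
move: npack_lt n_le_npack; case: (npack d (s / 2) A) => [y| |] npack_lt n_le_npack.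
- by have := n_le_npack (Num.truncn y).+1; rewrite lee_fin leNgt truncnS_gt.
- by have := lt_le_trans npack_lt (leey _); rewrite ltxx.
- by have := n_le_npack 0%N; rewrite leeNy_eq.
Qed.

End CoveringAndPackingNumbers.

Section Balls.
Context {R : realType} {T : Type} (d : T -> T -> R).

Lemma oball_sub_cball x r : oball d x r `<=` cball d x r.
Proof. by move=> y; apply: ltW. Qed.

Lemma cball_sub_oball x r r' : r < r' -> cball d x r `<=` oball d x r'.
Proof. by move=> rr' y /le_lt_trans; apply. Qed.

Hypothesis d_metric : is_metric d.

Lemma sub_mclosure A : A `<=` mclosure d A.
Proof. by move=> y Ay e e0; exists y; rewrite ?dist_xx. Qed.

Lemma mclosure_sub_cball A x r :
  mclosure d (A `&` oball d x r) `<=` mclosure d A `&` cball d x r.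
Proof.
case: d_metric => _ _ dsym dtri y y_cl; split.
  by move=> e /y_cl[a [Aa _] ya]; exists a.
rewrite /cball /= leNgt; apply/negP => r_lt.
have gap0 : 0 < d x y - r by rewrite subr_gt0.
have [a [_ xa] ya] := y_cl _ gap0.
by have := dtri x a y; rewrite (dsym a y) /oball /= in xa *; lra.
Qed.

End Balls.

Section TangentialDimensionAtAPoint.
Context {R : realType} {T : Type} {d : T -> T -> R} {E : set T} {x : T}.
Hypotheses (d_metric : is_metric d) (Ex : E x).

Let Bc r := E `&` cball d x r.
Let Bo r := E `&` oball d x r.

Let Bo_x r : 0 < r -> Bo r x.
Proof. by move=> r0; split; rewrite // /oball /= dist_xx. Qed.

Let Bc_x r : 0 < r -> Bc r x.
Proof. by move=> /Bo_x [_ /ltW]; split. Qed.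

Lemma tdim_npack_ncov :
  lower_tdim (npack d) Bc = lower_tdim (ncov d) Bc /\
  upper_tdim (npack d) Bc = upper_tdim (ncov d) Bc.
Proof.
apply: tdim_eq_of_dominated.
- by apply: count_dominated_half => s r s0 _; apply: npack_le_ncov_half.
- by apply: count_dominated_half => s r _ _; apply: ncov_le_npack_half.
- by move=> s r _ /Bc_x Bx; apply: npack_ge1 Bx.
- by move=> s r _ /Bc_x Bx; apply: ncov_ge1 Bx.
Qed.

Lemma tdim_ncovc_ncov :
  lower_tdim (ncovc d) Bc = lower_tdim (ncov d) Bc /\
  upper_tdim (ncovc d) Bc = upper_tdim (ncov d) Bc.
Proof.
apply: tdim_eq_of_dominated.
- by apply: count_dominated_id => s r _ _; apply: ncovc_le_ncov.
- by apply: count_dominated_half => s r s0 _; apply: ncov_le_ncovc_half.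
- by move=> s r _ /Bc_x Bx; apply: ncovc_ge1 Bx.
- by move=> s r _ /Bc_x Bx; apply: ncov_ge1 Bx.
Qed.

Let Bc_sub_Bo2 r : 0 < r -> Bc r `<=` Bo (2 * r).
Proof. by move=> r0; apply: setIS; apply: cball_sub_oball; lra. Qed.

Lemma tdim_oball_cball :
  lower_tdim (ncov d) Bo = lower_tdim (ncov d) Bc /\
  upper_tdim (ncov d) Bo = upper_tdim (ncov d) Bc.
Proof.
apply: tdim_eq_of_dominated.
- apply: count_dominated_id => s r _ _; apply: le_ncov.
  by apply: setIS; apply: oball_sub_cball.
- by apply: count_dominated_double => s r _ r0; apply: le_ncov; apply: Bc_sub_Bo2.
- by move=> s r _ /Bo_x Bx; apply: ncov_ge1 Bx.
- by move=> s r _ /Bc_x Bx; apply: ncov_ge1 Bx.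
Qed.

Lemma tdim_mclosure_cball : mclosed d E ->
  lower_tdim (ncov d) (fun r => mclosure d (Bo r)) = lower_tdim (ncov d) Bc /\
  upper_tdim (ncov d) (fun r => mclosure d (Bo r)) = upper_tdim (ncov d) Bc.
Proof.
move=> E_closed; apply: tdim_eq_of_dominated.
- apply: count_dominated_id => s r _ _; apply: le_ncov.
  by apply: subset_trans (mclosure_sub_cball _ d_metric _ _ _) _; apply: setSI.
- apply: count_dominated_double => s r _ r0; apply: le_ncov.
  exact: subset_trans (Bc_sub_Bo2 _ r0) (sub_mclosure _ d_metric _).
- by move=> s r _ /Bo_x /(sub_mclosure _ d_metric) Bx; apply: ncov_ge1 Bx.
- by move=> s r _ /Bc_x Bx; apply: ncov_ge1 Bx.
Qed.

End TangentialDimensionAtAPoint.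

Theorem proposition3p2 (R : realType) (T : Type) (d : T -> T -> R)
  (E : set T) (x : T) :
  is_metric d -> E x ->
  (* n replaced by nu *)
  lower_tdim (npack d) (fun r => E `&` cball d x r)
    = lower_tdim (ncov d) (fun r => E `&` cball d x r) /\
  upper_tdim (npack d) (fun r => E `&` cball d x r)
    = upper_tdim (ncov d) (fun r => E `&` cball d x r) /\
  (* n replaced by \overline{n} *)
  lower_tdim (ncovc d) (fun r => E `&` cball d x r)
    = lower_tdim (ncov d) (fun r => E `&` cball d x r) /\
  upper_tdim (ncovc d) (fun r => E `&` cball d x r)
    = upper_tdim (ncov d) (fun r => E `&` cball d x r) /\
  (* closed ball replaced by open ball *)
  lower_tdim (ncov d) (fun r => E `&` oball d x r)
    = lower_tdim (ncov d) (fun r => E `&` cball d x r) /\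
  upper_tdim (ncov d) (fun r => E `&` oball d x r)
    = upper_tdim (ncov d) (fun r => E `&` cball d x r) /\
  (* if E is closed: replaced by the closure of E `&` B(x,r) *)
  (mclosed d E ->
   lower_tdim (ncov d) (fun r => mclosure d (E `&` oball d x r))
     = lower_tdim (ncov d) (fun r => E `&` cball d x r) /\
   upper_tdim (ncov d) (fun r => mclosure d (E `&` oball d x r))
     = upper_tdim (ncov d) (fun r => E `&` cball d x r)).
Proof.
move=> d_metric Ex.
have [npack_lower npack_upper] := tdim_npack_ncov d_metric Ex.
have [ncovc_lower ncovc_upper] := tdim_ncovc_ncov d_metric Ex.
have [oball_lower oball_upper] := tdim_oball_cball d_metric Ex.
exact: (conj npack_lower (conj npack_upper (conj ncovc_lower (conj ncovc_upper
  (conj oball_lower (conj oball_upper (tdim_mclosure_cball d_metric Ex))))))).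
Qed.
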